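(* For every $t\in(0,1)$, $$\lim_{k \to \infty} \sum_{n=0}^{\infty} (-1)^n B^n_k(t) = 0,$$ where the limit is over nonnegative integers $k$.
   Context: The Bernstein polynomials are $B^n_k(t) = \binom{n}{k} t^k (1-t)^{n-k}$ for integers $0\le k\le n$, and $B^n_k(t)=0$ for $n<k$. *)

From Stdlib Require Import Reals.
From Coquelicot Require Import Coquelicot.
Open Scope R_scope.

(* Bernstein polynomial B^n_k(t) = C(n,k) t^k (1-t)^(n-k) for k <= n, and 0 for n < k.
   (Stdlib's [C n k] is not 0 for n < k, hence the explicit case split.) *)
Definition bernstein (n k : nat) (t : R) : R :=
  if Nat.leb k n then Binomial.C n k * t ^ k * (1 - t) ^ (n - k) else 0.

(** Pascal's rule [B^(n+1)_(k+1) = t B^n_k + (1-t) B^n_(k+1)] drives everything.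
    Summed over [n] it shows that [t] times every partial sum of [n |-> B^n_k(t)]
    is at most 1, so all these series converge absolutely.  Summed with the signs
    [(-1)^n], and using [B^0_(k+1) = 0], it gives
    [S_(k+1) = -t S_k - (1-t) S_(k+1)] for [S_k = sum_n (-1)^n B^n_k(t)], i.e.
    [S_k = q^k S_0] with [q = -t/(2-t)], and [|q| < 1] for [0 < t < 1]. *)

From Stdlib Require Import Reals Lia Lra.
From Coquelicot Require Import Coquelicot.
Open Scope R_scope.

Lemma bernstein_O_S (k : nat) (t : R) : bernstein 0 (S k) t = 0.
Proof. reflexivity. Qed.

Lemma bernstein_n_O (n : nat) (t : R) : bernstein n 0 t = (1 - t) ^ n.
Proof. unfold bernstein; simpl. rewrite C_n_0, Nat.sub_0_r. ring. Qed.

Lemma bernstein_S_O (n : nat) (t : R) :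
  bernstein (S n) 0 t = (1 - t) * bernstein n 0 t.
Proof. rewrite !bernstein_n_O. reflexivity. Qed.

Lemma bernstein_S_S (n k : nat) (t : R) :
  bernstein (S n) (S k) t = t * bernstein n k t + (1 - t) * bernstein n (S k) t.
Proof.
  unfold bernstein. change (Nat.leb (S k) (S n)) with (Nat.leb k n).
  destruct (Nat.leb_spec k n) as [Hkn | Hnk].
  - destruct (Nat.leb_spec (S k) n) as [HSkn | HnSk].
    + rewrite <- pascal by lia.
      replace (S n - S k)%nat with (S (n - S k)) by lia.
      replace (n - k)%nat with (S (n - S k)) by lia.
      simpl. ring.
    + replace k with n by lia.
      rewrite !Nat.sub_diag, !C_n_n. simpl. ring.
  - destruct (Nat.leb_spec (S k) n) as [HSkn | _]; [lia | ring].
Qed.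

Lemma bernstein_nonneg (n k : nat) (t : R) : 0 <= t <= 1 -> 0 <= bernstein n k t.
Proof.
  intros ht. unfold bernstein.
  destruct (Nat.leb k n); [| lra].
  assert (HC : 0 <= Binomial.C n k).
  { unfold Binomial.C. apply Rmult_le_pos; [apply pos_INR |].
    apply Rlt_le, Rinv_0_lt_compat, Rmult_lt_0_compat; apply INR_fact_lt_0. }
  apply Rmult_le_pos; [apply Rmult_le_pos |]; auto; apply pow_le; lra.
Qed.

Lemma sum_n_S_recurrence (b c : nat -> R) (alpha beta : R) :
  (forall n, c (S n) = alpha * b n + beta * c n) ->
  forall N, sum_n c (S N) = c O + alpha * sum_n b N + beta * sum_n c N.
Proof.
  intros Hc N. induction N as [| N IH].
  - rewrite sum_Sn, !sum_O, Hc. unfold plus; simpl. ring.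
  - rewrite sum_Sn, Hc, (sum_Sn b), IH at 1.
    rewrite (sum_Sn c N), Hc. unfold plus; simpl. ring.
Qed.

(* Nonnegativity gives [sum_n c N <= sum_n c (S N)]; expanding the right-hand
   side by the recurrence leaves a linear inequality in [sum_n c N]. *)
Lemma sum_n_le_of_pascal (b c : nat -> R) (t : R) :
  (forall n, 0 <= c n) ->
  (forall n, c (S n) = t * b n + (1 - t) * c n) ->
  forall N, t * sum_n c N <= c O + t * sum_n b N.
Proof.
  intros Hc Hrec N.
  assert (Hincr : sum_n c N <= sum_n c (S N)).
  { rewrite sum_Sn. unfold plus; simpl. specialize (Hc (S N)). lra. }
  rewrite (sum_n_S_recurrence b c t (1 - t) Hrec N) in Hincr.
  lra.
Qed.

Lemma bernstein_partial_sum_le (k : nat) (t : R) : 0 <= t <= 1 ->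
  forall N, t * sum_n (fun n => bernstein n k t) N <= 1.
Proof.
  intros ht. induction k as [| k IHk]; intros N.
  - eapply Rle_trans.
    + apply (sum_n_le_of_pascal (fun _ => 0)).
      * intros n. apply bernstein_nonneg, ht.
      * intros n. rewrite bernstein_S_O. ring.
    + rewrite sum_n_const, bernstein_n_O. simpl. lra.
  - eapply Rle_trans.
    + apply (sum_n_le_of_pascal (fun n => bernstein n k t)).
      * intros n. apply bernstein_nonneg, ht.
      * intros n. apply bernstein_S_S.
    + simpl. rewrite bernstein_O_S. specialize (IHk N). lra.
Qed.

Lemma ex_series_bernstein (k : nat) (t : R) : 0 < t <= 1 ->
  ex_series (fun n => bernstein n k t).
Proof.
  intros ht.
  destruct (ex_finite_lim_seq_incr (sum_n (fun n => bernstein n k t)) (/ t))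
    as [l Hl].
  - intros n. rewrite sum_Sn. unfold plus; simpl.
    pose proof (bernstein_nonneg (S n) k t). lra.
  - intros N. apply Rmult_le_reg_l with t; [lra |].
    rewrite Rinv_r by lra. apply bernstein_partial_sum_le; lra.
  - exists l. exact Hl.
Qed.

Lemma ex_series_alternating_bernstein (k : nat) (t : R) : 0 < t <= 1 ->
  ex_series (fun n => (-1) ^ n * bernstein n k t).
Proof.
  intros ht. apply ex_series_Rabs.
  apply ex_series_ext with (fun n => bernstein n k t).
  - intros n. rewrite Rabs_mult, pow_1_abs, Rmult_1_l.
    symmetry. apply Rabs_right, Rle_ge, bernstein_nonneg; lra.
  - apply ex_series_bernstein; lra.
Qed.

Lemma Series_S_recurrence (b c : nat -> R) (alpha beta : R) :
  ex_series b -> ex_series c ->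
  (forall n, c (S n) = alpha * b n + beta * c n) ->
  Series c = c O + alpha * Series b + beta * Series c.
Proof.
  intros Hb Hc Hrec.
  rewrite Series_incr_1 at 1 by exact Hc.
  rewrite (Series_ext _ _ Hrec), Series_plus, !Series_scal_l.
  - ring.
  - exact (ex_series_scal_l alpha b Hb).
  - exact (ex_series_scal_l beta c Hc).
Qed.

Lemma Series_alternating_bernstein_S (k : nat) (t : R) : 0 < t <= 1 ->
  (2 - t) * Series (fun n => (-1) ^ n * bernstein n (S k) t)
  = - t * Series (fun n => (-1) ^ n * bernstein n k t).
Proof.
  intros ht.
  assert (Hpascal : forall n, (-1) ^ S n * bernstein (S n) (S k) t
    = - t * ((-1) ^ n * bernstein n k t)
      + - (1 - t) * ((-1) ^ n * bernstein n (S k) t)).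
  { intros n. rewrite bernstein_S_S. simpl. ring. }
  pose proof (Series_S_recurrence _ _ _ _
    (ex_series_alternating_bernstein k t ht)
    (ex_series_alternating_bernstein (S k) t ht) Hpascal) as Hrec.
  cbv beta in Hrec. rewrite bernstein_O_S in Hrec. lra.
Qed.

Lemma Series_alternating_bernstein_geom (k : nat) (t : R) : 0 < t <= 1 ->
  Series (fun n => (-1) ^ n * bernstein n k t)
  = (- t / (2 - t)) ^ k * Series (fun n => (-1) ^ n * bernstein n 0 t).
Proof.
  intros ht. induction k as [| k IHk]; [simpl; ring |].
  apply Rmult_eq_reg_l with (2 - t); [| lra].
  rewrite Series_alternating_bernstein_S, IHk by exact ht.
  simpl. field. lra.
Qed.

Theorem mainTheorem9 (t : R) (ht : 0 < t < 1) :
  (forall k : nat, ex_series (fun n : nat => (-1) ^ n * bernstein n k t)) /\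
  is_lim_seq (fun k : nat => Series (fun n : nat => (-1) ^ n * bernstein n k t)) 0.
Proof.
  assert (ht' : 0 < t <= 1) by lra.
  split; [intros k; exact (ex_series_alternating_bernstein k t ht') |].
  set (S0 := Series (fun n => (-1) ^ n * bernstein n 0 t)).
  apply is_lim_seq_ext with (fun k => (- t / (2 - t)) ^ k * S0).
  { intros k. symmetry. exact (Series_alternating_bernstein_geom k t ht'). }
  replace (Finite 0) with (Rbar_mult 0 S0) by (simpl; f_equal; ring).
  apply is_lim_seq_scal_r, is_lim_seq_geom.
  rewrite Rabs_left1.
  - apply Rmult_lt_reg_r with (2 - t); [lra |]. field_simplify; lra.
  - unfold Rdiv. pose proof (Rinv_0_lt_compat (2 - t)). nra.
Qed.
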